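(* Let $f\in\mathbb{R}^{d_1\times\cdots\times d_m}$, $f\ge0$, be weakly irreducible and $1<p_1,\ldots,p_m<\infty$ such that there is $i\in[m]$ with $(m-1)p_i'\le p_k$ for every $k\in[m]\setminus\{i\}$. Define $\mu:\mathcal S^{d-d_i}_{++}\times\mathcal S^{d-d_i}_{++}\to\mathbb{R}$ by $$\mu(\mathbf x,\mathbf y)=\ln\Bigg(\prod_{l\in[m]\setminus\{i\}}\frac{\max_{j_l\in[d_l]}(x_{l,j_l}/y_{l,j_l})^{p_l-1}}{\min_{j_l\in[d_l]}(x_{l,j_l}/y_{l,j_l})^{p_l-1}}\Bigg)$$ and $G:\mathcal S^{d-d_i}_{++}\to\mathcal S^{d-d_i}_{++}$ by $G(\mathbf x)=\big(s_{i,k}(\mathbf x)/\|s_{i,k}(\mathbf x)\|_{p_k}\big)_{k\in[m]\setminus\{i\}}$. Then $\mu(G(\mathbf x),G(\mathbf y))\le\mu(\mathbf x,\mathbf y)$ for all $\mathbf x,\mathbf y\in\mathcal S^{d-d_i}_{++}$.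
   Context: $f$ is identified with the multilinear form $f(\mathbf x)=\sum f_{j_1,\ldots,j_m}x_{1,j_1}\cdots x_{m,j_m}$; $\nabla_kf(\mathbf x)$ is the vector of partials $\partial f/\partial x_{k,j_k}$ (independent of $\mathbf x_k$, so $\nabla_if$ is defined on $\mathcal R^{d-d_i}=\prod_{k\ne i}\mathbb{R}^{d_k}$). $p'=p/(p-1)$; $\psi_q(\mathbf y)_j=|y_j|^{q-1}\mathrm{sign}(y_j)$. $\mathcal S^{d-d_i}_{++}=\{\mathbf x\in\mathcal R^{d-d_i}:\mathbf x>0,\|\mathbf x_k\|_{p_k}=1\ \forall k\ne i\}$. For $k\ne i$, $s_{i,k}(\mathbf x)=\psi_{p_k'}\big(\nabla_kf(\mathbf x_1,\ldots,\mathbf x_{i-1},\psi_{p_i'}(\nabla_if(\mathbf x)),\mathbf x_{i+1},\ldots,\mathbf x_m)\big)$ (entrywise positive for $\mathbf x>0$ under weak irreducibility). Weak irreducibility: the undirected graph on $\bigcup_k\{k\}\times[d_k]$ with $(k,j_k)\sim(l,j_l)$ ($k\ne l$) iff $f_{j_1,\ldots,j_m}>0$ for some choice of the remaining indices, is connected. *)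

From HB Require Import structures.
From mathcomp Require Import all_boot all_order all_algebra.
From mathcomp Require Import all_classical all_reals all_analysis.
Set Implicit Arguments. Unset Printing Implicit Defensive.
Import Order.TTheory GRing.Theory Num.Theory.
Local Open Scope ring_scope.

Section Defs.
Variables (R : realType) (m : nat) (d : 'I_m -> nat).

Definition midx := {dffun forall k : 'I_m, 'I_(d k)}.
(* a point of prod_k R^{d_k}: x k is the block x_k *)
Definition mpoint := forall k : 'I_m, 'I_(d k) -> R.
Definition mtensor := midx -> R.

Definition hconj (p : R) : R := p / (p - 1).

Definition psi (q : R) (n : nat) (y : 'I_n -> R) : 'I_n -> R :=
  fun j => Num.sg (y j) * (`|y j| `^ (q - 1)).

Definition pnorm (p : R) (n : nat) (y : 'I_n -> R) : R :=
  (\sum_(j < n) `|y j| `^ p) `^ (p^-1).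

(* partial derivatives of the multilinear form, with the factors x_{l,j_l}
   given by an evaluation function e j l *)
Definition grad_at (f : mtensor) (e : midx -> 'I_m -> R) (k : 'I_m)
  : 'I_(d k) -> R :=
  fun t => \sum_(j : midx | j k == t) f j * \prod_(l < m | l != k) e j l.

Arguments grad_at f e k : clear implicits.
Definition grad (f : mtensor) (x : mpoint) (k : 'I_m) : 'I_(d k) -> R :=
  grad_at f (fun j l => x l (j l)) k.

Arguments grad f x k : clear implicits.
Definition s_ik (f : mtensor) (p : 'I_m -> R) (i : 'I_m) (x : mpoint) (k : 'I_m)
  : 'I_(d k) -> R :=
  let w := psi (hconj (p i)) (grad f x i) in
  psi (hconj (p k))
      (grad_at f (fun j l => if l == i then w (j i) else x l (j l)) k).

Arguments s_ik f p i x k : clear implicits.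
(* G(x); the (irrelevant) i-th block is left unchanged *)
Definition Gmap (f : mtensor) (p : 'I_m -> R) (i : 'I_m) (x : mpoint) : mpoint :=
  fun k t => if k == i then x k t
             else s_ik f p i x k t / pnorm (p k) (s_ik f p i x k).

(* S^{d-d_i}_{++} (only blocks k <> i are constrained) *)
Definition Spp (p : 'I_m -> R) (i : 'I_m) (x : mpoint) : Prop :=
  forall k : 'I_m, k != i ->
    (forall t, 0 < x k t) /\ pnorm (p k) (x k) = 1.

(* max and min over j of a (positive) family; the min uses the max as seed,
   which does not change the value when the index set is nonempty *)
Definition maxj (n : nat) (F : 'I_n -> R) : R := \big[Num.max/0]_(j < n) F j.
Definition minj (n : nat) (F : 'I_n -> R) : R :=
  \big[Num.min/maxj F]_(j < n) F j.

Definition mu (p : 'I_m -> R) (i : 'I_m) (x y : mpoint) : R :=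
  ln (\prod_(l < m | l != i)
        (maxj (fun j => (x l j / y l j) `^ (p l - 1)) /
         minj (fun j => (x l j / y l j) `^ (p l - 1)))).

Definition vertex := {k : 'I_m & 'I_(d k)}.
Definition wi_edge (f : mtensor) : rel vertex :=
  fun u v => (tag u != tag v) &&
    [exists j : midx, [&& j (tag u) == tagged u, j (tag v) == tagged v
                        & 0 < f j]].
Definition weakly_irreducible (f : mtensor) : Prop :=
  forall u v : vertex, connect (wi_edge f) u v.

End Defs.
Arguments grad_at {R m d} f e k.
Arguments grad {R m d} f x k.
Arguments s_ik {R m d} f p i x k.
Arguments hconj {R} p.
Arguments psi {R} q {n} y.
Arguments pnorm {R} p {n} y.
Arguments maxj {R n} F.
Arguments minj {R n} F.

(* If e^a_l y_l <= x_l <= e^b_l y_l entrywise in every block, these bounds propagate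
   through G: the multilinear, nonnegative map nabla_k f multiplies them (exponents add
   over the blocks l <> k), psi_q multiplies exponents by q - 1, and normalisation shifts
   both bounds by the same amount.  For the optimal a_l, b_l one has
   mu(x, y) = sum_l (p_l - 1)(b_l - a_l).  Block i enters G through psi_{p_i'}(nabla_i f),
   with spread (p_i' - 1) sum_{l <> i} (b_l - a_l), and (p_k - 1)(p_k' - 1) = 1, so
   mu(G x, G y) <= ((m - 1) p_i' - 1) sum_{l <> i} (b_l - a_l) <= mu(x, y). *)

From mathcomp Require Import all_boot all_order all_algebra.
From mathcomp Require Import all_classical all_reals all_analysis.
From mathcomp Require Import ring.
Import Order.TTheory GRing.Theory Num.Theory.
Local Open Scope ring_scope.
Set Implicit Arguments.
Unset Strict Implicit.

Section Sandwich.
Variable R : realType.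

Definition sandwich {n} (u v : 'I_n -> R) a b :=
  forall t, 0 < v t /\ expR a * v t <= u t <= expR b * v t.

Definition ratio_pow (q : R) {n} (u v : 'I_n -> R) j := (u j / v j) `^ q.

Definition osc (q : R) {n} (u v : 'I_n -> R) :=
  maxj (ratio_pow q u v) / minj (ratio_pow q u v).

Definition log_ratio_min (q : R) {n} (u v : 'I_n -> R) :=
  ln (minj (ratio_pow q u v)) / q.

Definition log_ratio_max (q : R) {n} (u v : 'I_n -> R) :=
  ln (maxj (ratio_pow q u v)) / q.

Lemma le_maxj {n} (F : 'I_n -> R) j : F j <= maxj F.
Proof. exact: le_bigmax. Qed.

Lemma minj_le {n} (F : 'I_n -> R) j : minj F <= F j.
Proof. exact: bigmin_le. Qed.

Lemma sandwich_gt0 {n} (u v : 'I_n -> R) (a b : R) :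
  sandwich u v a b -> forall t, 0 < u t.
Proof.
move=> uv t; have [v_gt0 /andP[le_au _]] := uv t.
by apply: lt_le_trans le_au; rewrite mulr_gt0 ?expR_gt0.
Qed.

Lemma sandwich_le {n} (u v : 'I_n -> R) (a b : R) :
  (0 < n)%N -> sandwich u v a b -> a <= b.
Proof.
move=> n_gt0 uv; have [v_gt0 /andP[le_au le_ub]] := uv (Ordinal n_gt0).
by rewrite -ler_expR -(ler_pM2r v_gt0) (le_trans le_au).
Qed.

Lemma sandwich_psi (q : R) {n} (u v : 'I_n -> R) (a b : R) :
  0 <= q - 1 -> sandwich u v a b ->
  sandwich (psi q u) (psi q v) ((q - 1) * a) ((q - 1) * b).
Proof.
move=> q1_ge0 uv t; have u_gt0 := sandwich_gt0 uv t.
have [v_gt0 /andP[le_au le_ub]] := uv t.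
have psiE w : 0 < w t -> psi q w t = w t `^ (q - 1).
  by move=> w_gt0; rewrite /psi gtr0_sg // gtr0_norm // mul1r.
rewrite !psiE //; split; first exact: powR_gt0.
have e_ge0 (c : R) : 0 <= expR c by exact/ltW/expR_gt0.
have v_ge0 := ltW v_gt0.
rewrite [(q - 1) * a]mulrC [(q - 1) * b]mulrC !expRM -!powRM ?e_ge0 //.
by apply/andP; split; apply: ge0_ler_powR;
  rewrite // nnegrE ?mulr_ge0 ?e_ge0 // ltW.
Qed.

Lemma sandwich_scale {n} (u v : 'I_n -> R) (a b cu cv : R) :
  0 < cu -> 0 < cv -> sandwich u v a b ->
  sandwich (fun t => u t / cu) (fun t => v t / cv)
           (a + ln (cv / cu)) (b + ln (cv / cu)).
Proof.
move=> cu_gt0 cv_gt0 uv t; have [v_gt0 /andP[le_au le_ub]] := uv t.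
split; first by rewrite divr_gt0.
rewrite !expRD lnK ?posrE ?divr_gt0 //.
have scaleE c : expR c * (cv / cu) * (v t / cv) = expR c * v t / cu.
  by field; rewrite !gt_eqF.
by rewrite !scaleE !ler_pM2r ?invr_gt0 // le_au.
Qed.

Lemma osc_le_sandwich (q : R) {n} (u v : 'I_n -> R) (a b : R) :
  (0 < n)%N -> 0 < q -> sandwich u v a b ->
  0 < osc q u v <= expR (q * (b - a)).
Proof.
move=> n_gt0 q_gt0 uv.
have F_bounds j : expR (a * q) <= ratio_pow q u v j <= expR (b * q).
  have [v_gt0 /andP[le_au le_ub]] := uv j; have u_gt0 := sandwich_gt0 uv j.
  have uv_ge0 : u j / v j \in Num.nneg by rewrite nnegrE divr_ge0 ?ltW.
  have e_ge0 (c : R) : expR c \in Num.nneg by rewrite nnegrE ltW ?expR_gt0.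
  have q_ge0 := ltW q_gt0.
  rewrite /ratio_pow !expRM; apply/andP; split; apply: ge0_ler_powR => //.
  - by rewrite ler_pdivlMr.
  - by rewrite ler_pdivrMr.
have min_ge : expR (a * q) <= minj (ratio_pow q u v).
  apply: le_bigmin => [|j _]; last by case/andP: (F_bounds j).
  case/andP: (F_bounds (Ordinal n_gt0)) => le_aF _.
  exact: le_trans le_aF (le_maxj _ _).
have max_le : maxj (ratio_pow q u v) <= expR (b * q).
  by apply: bigmax_le => [|j _]; [exact/ltW/expR_gt0 | case/andP: (F_bounds j)].
have min_gt0 := lt_le_trans (expR_gt0 _) min_ge.
have max_gt0 : 0 < maxj (ratio_pow q u v).
  by apply: lt_le_trans min_gt0 (le_trans (minj_le _ (Ordinal n_gt0)) (le_maxj _ _)).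
rewrite /osc divr_gt0 //= ler_pdivrMr // mulrBr expRB [q * b]mulrC [q * a]mulrC.
rewrite mulrAC ler_pdivlMr ?expR_gt0 //.
by apply: ler_pM => //; apply: ltW; rewrite ?expR_gt0.
Qed.

Lemma sandwich_osc (q : R) {n} (u v : 'I_n -> R) : (0 < n)%N -> 0 < q ->
  (forall t, 0 < u t) -> (forall t, 0 < v t) ->
  sandwich u v (log_ratio_min q u v) (log_ratio_max q u v) /\
  osc q u v = expR (q * (log_ratio_max q u v - log_ratio_min q u v)).
Proof.
move=> n_gt0 q_gt0 u_gt0 v_gt0.
have F_gt0 j : 0 < ratio_pow q u v j by rewrite powR_gt0 ?divr_gt0.
have min_gt0 : 0 < minj (ratio_pow q u v).
  apply: lt_bigmin => [|j _]; last exact: F_gt0.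
  exact: lt_le_trans (F_gt0 (Ordinal n_gt0)) (le_maxj _ _).
have max_gt0 : 0 < maxj (ratio_pow q u v).
  exact: lt_le_trans min_gt0 (le_trans (minj_le _ (Ordinal n_gt0)) (le_maxj _ _)).
split; last first.
  have -> : q * (log_ratio_max q u v - log_ratio_min q u v)
            = ln (maxj (ratio_pow q u v)) - ln (minj (ratio_pow q u v)).
    by rewrite /log_ratio_max /log_ratio_min; field; rewrite gt_eqF.
  by rewrite expRB !lnK.
move=> t; split => //; have uv_gt0 : 0 < u t / v t by rewrite divr_gt0.
have lnF : ln (ratio_pow q u v t) = ln (u t / v t) * q.
  by rewrite /ratio_pow ln_powR mulrC.
have le_a : log_ratio_min q u v <= ln (u t / v t).
  by rewrite ler_pdivrMr // -lnF ler_ln ?posrE ?minj_le.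
have le_b : ln (u t / v t) <= log_ratio_max q u v.
  by rewrite ler_pdivlMr // -lnF ler_ln ?posrE ?le_maxj.
apply/andP; split.
- by rewrite -ler_pdivlMr // -[u t / v t]lnK ?posrE // ler_expR.
- by rewrite -ler_pdivrMr // -[u t / v t]lnK ?posrE // ler_expR.
Qed.

Lemma pnorm_gt0 (r : R) {n} (u : 'I_n -> R) :
  (0 < n)%N -> (forall t, 0 < u t) -> 0 < pnorm r u.
Proof.
move=> n_gt0 u_gt0; apply: powR_gt0.
rewrite (bigD1 (Ordinal n_gt0)) //= ltr_pwDl ?powR_gt0 ?normr_gt0 ?gt_eqF //.
by apply: sumr_ge0 => j _; exact: powR_ge0.
Qed.

Lemma ln_prod_le_sum (I : finType) (P : pred I) (F G : I -> R) :
  (forall k, P k -> 0 < F k <= expR (G k)) ->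
  ln (\prod_(k | P k) F k) <= \sum_(k | P k) G k.
Proof.
move=> FG; rewrite -[X in _ <= X]expRK ler_ln ?posrE ?expR_gt0 //; last first.
  by apply: prodr_gt0 => k /FG /andP[].
rewrite expR_sum; apply: ler_prod => k /FG /andP[F_gt0 ->].
by rewrite ltW.
Qed.

Lemma hconj_sub1 (r : R) : 1 < r -> hconj r - 1 = (r - 1)^-1.
Proof. by move=> r_gt1; rewrite /hconj; field; rewrite subr_eq0 gt_eqF. Qed.

End Sandwich.

Section ExtBound.
Variables (R : comPzRingType) (m : nat) (i : 'I_m).

(* The bound for block [i] after it is replaced by [psi (hconj (p i)) (grad f x i)]. *)
Definition ext_bound (c : R) (w : 'I_m -> R) (l : 'I_m) : R :=
  if l == i then c * \sum_(l' | l' != i) w l' else w l.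

Lemma ext_boundB c (a b : 'I_m -> R) l :
  ext_bound c b l - ext_bound c a l = ext_bound c (fun l => b l - a l) l.
Proof. by rewrite /ext_bound sumrB; case: ifP => _ //; ring. Qed.

Lemma sum_sum_ext_bound c (w : 'I_m -> R) :
  \sum_(k | k != i) \sum_(l | l != k) ext_bound c w l
  = \sum_(l | l != i) ((m%:R - 1) * (c + 1) - 1) * w l.
Proof.
set S := \sum_(l | l != i) w l.
have inner k : k != i -> \sum_(l | l != k) ext_bound c w l = c * S + S - w k.
  move=> ki; rewrite (bigD1 i) 1?eq_sym //= /ext_bound eqxx -/S.
  rewrite (eq_bigr w) => [|l /andP[_ /negbTE ->] //].
  rewrite (eq_bigl (fun l => (l != i) && (l != k))) => [|l]; last by rewrite andbC.
  by rewrite /S (bigD1 k) //=; ring.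
rewrite (eq_bigr _ inner) sumrB -mulr_sumr -/S.
have -> : \sum_(k | k != i) (c * S + S) = (c * S + S) *+ #|predC1 i|.
  by rewrite -sumr_const; apply: eq_bigl => k; rewrite inE.
have m_gt0 : (0 < m)%N := leq_ltn_trans (leq0n i) (ltn_ord i).
by rewrite cardC1 card_ord -mulr_natl -{2}(prednK m_gt0) -addn1 natrD; ring.
Qed.

End ExtBound.

Section Gradient.
Variables (R : realType) (m : nat) (d : 'I_m -> nat) (f : mtensor R d).
Hypothesis f_ge0 : forall j, 0 <= f j.

Lemma grad_at_eq0 (e : midx d -> 'I_m -> R) k t l : d l = 0%N -> grad_at f e k t = 0.
Proof. by move=> dl0; apply: big1 => j _; case: (j l) => ?; rewrite dl0. Qed.

Lemma grad_at_gt0 (e : midx d -> 'I_m -> R) k t :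
  (forall j l, l != k -> 0 < e j l) -> (exists2 j : midx d, j k = t & 0 < f j) ->
  0 < grad_at f e k t.
Proof.
move=> e_gt0 [j0 j0k f_j0]; rewrite /grad_at (bigD1 j0) ?j0k //=.
rewrite ltr_pwDl ?mulr_gt0 ?prodr_gt0 // => [l lk|]; first exact: e_gt0.
by apply: sumr_ge0 => j _; rewrite mulr_ge0 ?prodr_ge0 // => l lk; exact/ltW/e_gt0.
Qed.

Lemma weakly_irreducible_support k l : weakly_irreducible f -> k != l -> 'I_(d l) ->
  forall t : 'I_(d k), exists2 j : midx d, j k = t & 0 < f j.
Proof.
move=> f_wi kl s t.
have [[|v path] /= edges last_v] := connectP (f_wi (Tagged _ t) (Tagged _ s)).
  by move/(congr1 tag): last_v => /= lk; rewrite lk eqxx in kl.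
case/andP: edges => /andP[_ /existsP[j /and3P[/eqP jk _ f_j]]] _.
by exists j.
Qed.

Lemma grad_at_sandwich (e e' : midx d -> 'I_m -> R) k l0 (a b : 'I_m -> R) :
  weakly_irreducible f -> l0 != k -> 'I_(d l0) ->
  (forall j l, l != k ->
     0 < e' j l /\ expR (a l) * e' j l <= e j l <= expR (b l) * e' j l) ->
  sandwich (grad_at f e k) (grad_at f e' k)
           (\sum_(l | l != k) a l) (\sum_(l | l != k) b l).
Proof.
move=> f_wi l0k s ee' t; split.
  apply: grad_at_gt0 => [j l lk|]; first by have [] := ee' j l lk.
  by apply: weakly_irreducible_support f_wi _ s t; rewrite eq_sym.
rewrite /grad_at !mulr_sumr !expR_sum.
apply/andP; split; apply: ler_sum => j _; rewrite mulrCA -big_split /=;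
  apply: ler_wpM2l => //; apply: ler_prod => l lk;
  have [e'_gt0 /andP[le_ae le_eb]] := ee' j l lk.
- by rewrite le_ae mulr_ge0 // ltW ?expR_gt0.
- by rewrite le_eb (le_trans _ le_ae) // mulr_ge0 // ltW ?expR_gt0.
Qed.

End Gradient.

(* Otherwise section variables of type [mpoint] get their block index implicit. *)
Unset Implicit Arguments.

Section Contraction.
Context {R : realType} {m : nat} {d : 'I_m -> nat}.
Context {f : mtensor R d} {p : 'I_m -> R} {i : 'I_m}.
Hypotheses (f_ge0 : forall j, 0 <= f j) (f_wi : weakly_irreducible f).
Hypothesis p_gt1 : forall k, 1 < p k.

Let c := hconj (p i) - 1.

Lemma muE (x y : mpoint R d) :
  mu p i x y = ln (\prod_(l | l != i) osc (p l - 1) (x l) (y l)).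
Proof. by []. Qed.

Lemma Spp_dim_gt0 (x : mpoint R d) k : Spp p i x -> k != i -> (0 < d k)%N.
Proof.
move=> x_Spp ki; rewrite lt0n; apply/eqP => dk0; have [_] := x_Spp k ki.
rewrite /pnorm big1 => [|t _]; last by have := ltn_ord t; rewrite {2}dk0.
rewrite powR0 ?invr_eq0 ?gt_eqF ?(lt_trans _ (p_gt1 k)) //.
by move/eqP; rewrite eq_sym oner_eq0.
Qed.

(* Then [G] vanishes off block [i] and [mu] degenerates to [ln 0 = 0] or [ln 1 = 0]. *)
Lemma mu_Gmap_dim0 (x y : mpoint R d) : d i = 0%N ->
  mu p i (Gmap f p i x) (Gmap f p i y) = 0.
Proof.
move=> di0.
have G0 (z : mpoint R d) l t : l != i -> Gmap f p i z l t = 0.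
  by move=> li; rewrite /Gmap (negbTE li) /s_ik /psi (grad_at_eq0 _ _ _ di0) sgr0 !mul0r.
have osc0 l : l != i -> osc (p l - 1) (Gmap f p i x l) (Gmap f p i y l) = 0.
  move=> li; rewrite /osc /maxj; set M := \big[_/_]_j _.
  suff -> : M = 0 by rewrite mul0r.
  apply: (big_ind (fun v : R => v = 0)) => // [v w -> -> | t _]; first exact: maxxx.
  by rewrite /ratio_pow !G0 // mul0r powR0 // gt_eqF // subr_gt0.
rewrite muE (eq_bigr _ osc0).
have [l li | no_l] := pickP (fun l => l != i); first by rewrite (bigD1 l) //= mul0r ln0.
by rewrite big_pred0 ?ln1.
Qed.

Context {x y : mpoint R d} {a b : 'I_m -> R}.
Hypotheses (d_gt0 : forall k, k != i -> (0 < d k)%N) (di_gt0 : (0 < d i)%N).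
Hypothesis xy_sandwich : forall l, l != i -> sandwich (x l) (y l) (a l) (b l).

Lemma sandwich_psi_grad k : k != i ->
  sandwich (psi (hconj (p i)) (grad f x i)) (psi (hconj (p i)) (grad f y i))
           (c * \sum_(l | l != i) a l) (c * \sum_(l | l != i) b l).
Proof.
move=> ki; apply: sandwich_psi; first by rewrite /c hconj_sub1 // invr_ge0 subr_ge0 ltW.
apply: (grad_at_sandwich f_ge0 f_wi ki (Ordinal (d_gt0 k ki))) => j l li.
exact: xy_sandwich l li (j l).
Qed.

Lemma sandwich_s_ik k : k != i ->
  sandwich (s_ik f p i x k) (s_ik f p i y k)
           ((hconj (p k) - 1) * \sum_(l | l != k) ext_bound i c a l)
           ((hconj (p k) - 1) * \sum_(l | l != k) ext_bound i c b l).
Proof.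
move=> ki; apply: sandwich_psi; first by rewrite hconj_sub1 // invr_ge0 subr_ge0 ltW.
apply: (grad_at_sandwich f_ge0 f_wi _ (Ordinal di_gt0)); first by rewrite eq_sym.
move=> j l lk /=; rewrite /ext_bound; case: eqP => [_ | /eqP li].
  exact: sandwich_psi_grad k ki (j i).
exact: xy_sandwich l li (j l).
Qed.

Lemma osc_Gmap_le k : k != i ->
  0 < osc (p k - 1) (Gmap f p i x k) (Gmap f p i y k)
    <= expR (\sum_(l | l != k) ext_bound i c (fun l => b l - a l) l).
Proof.
move=> ki; have s := sandwich_s_ik k ki.
have cx := pnorm_gt0 (p k) (d_gt0 k ki) (sandwich_gt0 s).
have cy := pnorm_gt0 (p k) (d_gt0 k ki) (fun t => (s t).1).
have GE z : Gmap f p i z k = fun t => s_ik f p i z k t / pnorm (p k) (s_ik f p i z k).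
  by rewrite /Gmap (negbTE ki).
have pk1_gt0 : 0 < p k - 1 by rewrite subr_gt0.
rewrite !GE.
have /andP[-> osc_le] := osc_le_sandwich (d_gt0 k ki) pk1_gt0 (sandwich_scale cx cy s).
rewrite (le_trans osc_le) // ler_expR le_eqVlt; apply/orP; left; apply/eqP.
rewrite hconj_sub1 // -(eq_bigr _ (fun l _ => ext_boundB i c a b l)) sumrB.
by field; rewrite gt_eqF.
Qed.

Lemma mu_Gmap_le :
  mu p i (Gmap f p i x) (Gmap f p i y)
  <= \sum_(k | k != i) \sum_(l | l != k) ext_bound i c (fun l => b l - a l) l.
Proof. by rewrite muE; apply: ln_prod_le_sum => k; exact: osc_Gmap_le. Qed.

End Contraction.

Theorem proposition9 (R : realType) (m : nat) (d : 'I_m -> nat)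
  (f : mtensor R d) (p : 'I_m -> R) (i : 'I_m) :
  (forall j, 0 <= f j) ->
  weakly_irreducible f ->
  (forall k, 1 < p k) ->
  (forall k, k != i -> (m%:R - 1) * hconj (p i) <= p k) ->
  forall x y : mpoint R d, Spp p i x -> Spp p i y ->
    mu p i (Gmap f p i x) (Gmap f p i y) <= mu p i x y.
Proof.
move=> f_ge0 f_wi p_gt1 p_large x y x_Spp y_Spp.
have q_gt0 l : 0 < p l - 1 by rewrite subr_gt0.
have d_gt0 l : l != i -> (0 < d l)%N := Spp_dim_gt0 p_gt1 x l x_Spp.
have Spp_gt0 (z : mpoint R d) : Spp p i z -> forall l, l != i -> forall t, 0 < z l t.
  by move=> z_Spp l li; have [] := z_Spp l li.
pose a l := log_ratio_min (p l - 1) (x l) (y l).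
pose b l := log_ratio_max (p l - 1) (x l) (y l).
have xy l (li : l != i) : sandwich (x l) (y l) (a l) (b l)
    /\ osc (p l - 1) (x l) (y l) = expR ((p l - 1) * (b l - a l)).
  by apply: sandwich_osc; rewrite ?d_gt0 ?q_gt0 //; exact: Spp_gt0.
have w_ge0 l : l != i -> 0 <= b l - a l.
  by move=> li; rewrite subr_ge0; exact: sandwich_le (d_gt0 l li) (xy l li).1.
rewrite [mu p i x y]muE (eq_bigr _ (fun l li => (xy l li).2)) -expR_sum expRK.
have [di0 | di_gt0] := posnP (d i).
  by rewrite mu_Gmap_dim0 // sumr_ge0 // => l li; rewrite mulr_ge0 ?w_ge0 ?ltW.
apply: le_trans (mu_Gmap_le f_ge0 f_wi p_gt1 d_gt0 di_gt0 (fun l li => (xy l li).1)) _.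
rewrite sum_sum_ext_bound subrK; apply: ler_sum => l li.
by rewrite ler_wpM2r ?w_ge0 // lerD2r p_large.
Qed.
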